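(* There is no arithmetical structure $(r_1,\dots,r_{18})$ on $K_{18}$ with $r_1=79$.
   Context: An arithmetical structure on the complete graph $K_n$ is an $n$-tuple $(r_1,r_2,\dots,r_n)$ of positive integers with $\gcd(r_1,\dots,r_n)=1$ such that $r_j$ divides $\sum_{i=1}^n r_i$ for every $j$. The entries are always listed so that $r_1\geq r_2\geq\dots\geq r_n$; thus $r_1$ is the largest value of the structure. *)

From mathcomp Require Import all_boot.
Set Implicit Arguments. Unset Strict Implicit. Unset Printing Implicit Defensive.

(* An arithmetical structure on the complete graph K_n: an n-tuple of positive
   integers r_0,...,r_{n-1} (0-indexed) with gcd 1 such that each r_j divides
   the total sum. *)
Definition arith_structure_Kn (n : nat) (r : 'I_n -> nat) : Prop :=
  (forall i, 0 < r i) /\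
  \big[gcdn/0]_(i < n) r i = 1 /\
  (forall j, r j %| \sum_(i < n) r i) /\
  (forall i j : 'I_n, i <= j -> r j <= r i).

From mathcomp Require Import all_boot.

(* Let r be an arithmetical structure on K_n.+1 with largest
   entry m = r 0 and total S.  Since m divides S and every entry is at most m,
   S = m * a with a <= n.+1, and each entry is a divisor of m * a lying in
   [1, m].  If a = n.+1 every entry equals m, so the gcd condition forces
   m = 1.  Otherwise the n remaining entries r 1, ..., r n are divisors of
   m * a in [1, m] adding up to m * a - m.
   For n.+1 = 18 and m = 79 we rule this out by a certified computation:
   the set of all sums of 17 elements of a finite list of naturals is computed
   as a bit vector by dynamic programming (one shift-and-union per summand),
   and evaluation shows that 79 * a - 79 is never such a sum for a < 18.
   The file first develops the bit-vector subset-sum machinery and its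
   completeness, then the general facts about arithmetical structures on K_n,
   then the certificate, and finally the theorem. *)

(* Finite sets of naturals are represented as bit vectors: x belongs to v iff
   nth false v x.  Pointwise union of two bit vectors of any lengths: *)
Fixpoint bunion (u w : bitseq) : bitseq :=
  match u, w with
  | [::], _ => w
  | _, [::] => u
  | x :: u', y :: w' => (x || y) :: bunion u' w'
  end.

Lemma nth_bunion u w x : nth false (bunion u w) x = nth false u x || nth false w x.
Proof. by elim: u w x => [|b u IH] [|c w] [|x] //=; rewrite ?orbF. Qed.

Definition add_step (L : seq nat) (v : bitseq) : bitseq :=
  foldr (fun d acc => bunion (ncons d false v) acc) [::] L.

Lemma add_step_complete L v d x :
  d \in L -> nth false v x -> nth false (add_step L v) (x + d).
Proof.
elim: L => [|e L IH] //=; rewrite inE nth_bunion => /orP [/eqP-> vx | dL vx].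
  by rewrite nth_ncons ltnNge leq_addl addnK vx.
by rewrite IH ?orbT.
Qed.

Fixpoint nsums (L : seq nat) (n : nat) : bitseq :=
  if n is n'.+1 then add_step L (nsums L n') else [:: true].

Lemma nsums_complete {L : seq nat} {n : nat} {f : 'I_n -> nat} :
  (forall i, f i \in L) -> nth false (nsums L n) (\sum_(i < n) f i).
Proof.
elim: n f => [|n IH] f fL; first by rewrite big_ord0.
by rewrite big_ord_recr /=; apply: add_step_complete; [apply: fL | apply: IH].
Qed.

Definition small_divisors (m N : nat) : seq nat := [seq d <- iota 1 m | d %| N].

Definition sum_quotient {n : nat} (r : 'I_n.+1 -> nat) : nat :=
  (\sum_(i < n.+1) r i) %/ r ord0.

Section ArithmeticalStructure.

Context {n : nat} {r : 'I_n.+1 -> nat}.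
Hypothesis r_arith : arith_structure_Kn r.

Let S := \sum_(i < n.+1) r i.
Let m := r ord0.

Lemma entry_le_max i : r i <= m.
Proof. by have [_ [_ [_ r_sorted]]] := r_arith; apply: r_sorted. Qed.

Lemma sum_mulE : S = m * sum_quotient r.
Proof. by have [_ [_ [r_dvd _]]] := r_arith; rewrite /sum_quotient mulnC divnK ?r_dvd. Qed.

Lemma sum_le_mul : S <= n.+1 * m.
Proof.
rewrite -[n.+1]card_ord -sum_nat_const.
by apply: leq_sum => i _; apply: entry_le_max.
Qed.

Lemma sum_quotient_le : sum_quotient r <= n.+1.
Proof.
have m_gt0 : 0 < m by have [r_pos _] := r_arith; apply: r_pos.
by rewrite -(leq_pmul2l m_gt0) -sum_mulE mulnC sum_le_mul.
Qed.

Lemma entry_small_divisor i : r i \in small_divisors m (m * sum_quotient r).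
Proof.
have [r_pos [_ [r_dvd _]]] := r_arith.
by rewrite mem_filter mem_iota -sum_mulE r_dvd r_pos add1n ltnS entry_le_max.
Qed.

Lemma tail_sum : \sum_(i < n) r (lift ord0 i) = m * sum_quotient r - m.
Proof. by rewrite -sum_mulE /S big_ord_recl addKn. Qed.

(* If the total is maximal, all entries equal m, so the gcd condition gives m = 1. *)
Lemma full_sum_max_one : sum_quotient r = n.+1 -> m = 1.
Proof.
move=> a_full; have [_ [r_gcd _]] := r_arith.
have gap0 : \sum_(i < n.+1) (m - r i) = 0.
  rewrite (sumnB _ (fun i _ => entry_le_max i)) sum_nat_const card_ord.
  by rewrite -/S sum_mulE a_full mulnC subnn.
have r_max i : r i = m.
  apply/eqP; rewrite eqn_leq entry_le_max -subn_eq0.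
  by move/eqP: gap0; rewrite sum_nat_eq0 => /forallP/(_ i).
apply/eqP; rewrite -dvdn1 -r_gcd.
by apply/dvdn_biggcdP => i _; rewrite r_max.
Qed.

End ArithmeticalStructure.

Lemma no_tail_K18_79 :
  all (fun a => ~~ nth false (nsums (small_divisors 79 (79 * a)) 17) (79 * a - 79))
      (iota 0 18).
Proof. by vm_compute. Qed.

Theorem mainTheorem10 :
  ~ exists r : 'I_18 -> nat,
      arith_structure_Kn r /\ r ord0 = 79.
Proof.
move=> [r [r_arith r0]].
have := sum_quotient_le r_arith; rewrite leq_eqVlt => /orP [/eqP a_full | a_lt].
  by have := full_sum_max_one r_arith a_full; rewrite r0.
have tail_reachable :=
  nsums_complete (fun i => entry_small_divisor r_arith (lift ord0 i)).
rewrite (tail_sum r_arith) r0 in tail_reachable.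
move/allP: no_tail_K18_79 => /(_ (sum_quotient r)).
by rewrite mem_iota add0n a_lt tail_reachable => /(_ isT).
Qed.
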